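(* Let $0<\lambda_1\le\lambda_2\le1$ and let $K_1,K_2:\mathbb{R}_+\to\mathbb{R}$ be two functions. Define \[ I:=\sup_{\varphi_1,\varphi_2}\int_0^\infty\big(\varphi_1(t)K_1(t)+\varphi_2(t)K_2(t)\big)\,\mathrm{d}t, \] the supremum over all functions $\varphi_i:\mathbb{R}_+\to[0,\lambda_i]$ ($i=1,2$) such that $\varphi_1+\varphi_2$ is nondecreasing, and for $0\le a\le b\le c\le\infty$ define \[ I(a,b,c):=\lambda_1\int_a^c\max\{K_1(t),K_2(t)\}\,\mathrm{d}t+\lambda_1\int_c^\infty(K_1(t)+K_2(t))\,\mathrm{d}t+(\lambda_2-\lambda_1)\int_b^\infty K_2(t)\,\mathrm{d}t . \] Then $I=\sup_{0\le a\le b\le c\le\infty}I(a,b,c)$.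
   Context: All functions are Borel measurable. *)

From HB Require Import structures.
From mathcomp Require Import all_boot all_order all_algebra.
From mathcomp Require Import all_classical all_reals all_analysis.
Set Implicit Arguments. Unset Strict Implicit. Unset Printing Implicit Defensive.
Import Order.TTheory GRing.Theory Num.Theory.
Local Open Scope classical_set_scope.
Local Open Scope ring_scope.
Local Open Scope ereal_scope.

Definition Rnonneg (R : realType) : set R := [set t : R | (0 <= t)%R].

Definition eitv_co (R : realType) (a c : \bar R) : set R :=
  [set t : R | a <= t%:E /\ t%:E < c].
Definition eitv_inf (R : realType) (c : \bar R) : set R :=
  [set t : R | c <= t%:E].

Definition Jfun (R : realType) (K1 K2 phi1 phi2 : R -> R) : \bar R :=
  \int[lebesgue_measure]_(t in @Rnonneg R)
     ((phi1 t * K1 t + phi2 t * K2 t)%R)%:E.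

Definition admissible (R : realType) (l1 l2 : R) (phi1 phi2 : R -> R) : Prop :=
  [/\ measurable_fun (@Rnonneg R) phi1, measurable_fun (@Rnonneg R) phi2,
      (forall t, (0 <= t)%R -> (0 <= phi1 t <= l1)%R /\ (0 <= phi2 t <= l2)%R)
    & (forall s t, (0 <= s)%R -> (s <= t)%R ->
         (phi1 s + phi2 s <= phi1 t + phi2 t)%R)].

Definition Isup (R : realType) (l1 l2 : R) (K1 K2 : R -> R) : \bar R :=
  ereal_sup [set x | exists phi1 phi2 : R -> R,
     admissible l1 l2 phi1 phi2 /\ x = Jfun K1 K2 phi1 phi2].

Definition Iabc (R : realType) (l1 l2 : R) (K1 K2 : R -> R) (a b c : \bar R)
  : \bar R :=
  l1%:E * (\int[lebesgue_measure]_(t in eitv_co a c) (Num.max (K1 t) (K2 t))%:E)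
  + l1%:E * (\int[lebesgue_measure]_(t in eitv_inf c) ((K1 t + K2 t)%R)%:E)
  + (l2 - l1)%:E * (\int[lebesgue_measure]_(t in eitv_inf b) (K2 t)%:E).

Definition Iabc_sup (R : realType) (l1 l2 : R) (K1 K2 : R -> R) : \bar R :=
  ereal_sup [set x | exists a b c : \bar R,
     [/\ 0 <= a, a <= b, b <= c & x = Iabc l1 l2 K1 K2 a b c]].

(* Lower bound: for 0 <= a <= b <= c, I(a,b,c) is the value of the admissible
   pair that puts mass l1 on [a, oo) on the larger of K1, K2, mass l1 on
   [c, oo) on the smaller one, and mass l2 - l1 on [b, oo) on K2.
   Upper bound: s := phi1 + phi2 is nondecreasing with values in [0, l1 + l2],
   and pointwise
     phi1 K1 + phi2 K2 <= max(K1,K2) (s in [0,l1]) + K2 (s in [l1,l2])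
                          + min(K1,K2) (s in [l2,l2+l1]),
   where (s in [lo,lo+w]) = min((s - lo)^+, w) is the part of s in that layer.
   Each layer is the integral over levels th of the indicator of {s > th},
   and {s > th} is the half-line [x_th, oo), up to its endpoint, because s is
   monotone. Cutting the three layers at the same fraction k/n of their
   width turns the bound into an average of values I(x_th1, x_th2, x_th3)
   plus an error O(1/n). *)

From HB Require Import structures.
From mathcomp Require Import all_boot all_order all_algebra.
From mathcomp Require Import all_classical all_reals all_analysis.
From mathcomp Require Import measurable_realfun.
From mathcomp.algebra_tactics Require Import ring lra.
Import Order.TTheory GRing.Theory Num.Theory numFieldNormedType.Exports.
Local Open Scope classical_set_scope.
Local Open Scope ring_scope.

Set Implicit Arguments. Unset Strict Implicit. Unset Printing Implicit Defensive.

Lemma ler_of_forall_ler_add_divn (R : archiFieldType) (x y C : R) :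
  (forall n : nat, (0 < n)%N -> x <= y + C / n%:R) -> x <= y.
Proof.
move=> xyC; apply/ler_addgt0Pr => e e0.
have [C0|C0] := leP C 0.
  by apply: le_trans (xyC 1%N isT) _; rewrite divr1 lerD2l; apply: le_trans C0 (ltW e0).
pose n := (Num.trunc (C / e)).+1.
have n0 : 0 < n%:R :> R by rewrite ltr0n.
have Cn : C / n%:R < e.
  by rewrite ltr_pdivrMr // mulrC -ltr_pdivrMr //; exact: truncnS_gt.
by apply: le_trans (xyC n isT) _; rewrite lerD2l ltW.
Qed.

Section layers.
Context {R : realFieldType}.
Implicit Types lo w s c h y : R.

Definition layer lo w s : R := Num.min (Num.max (s - lo) 0) w.

Lemma layer_ge0 lo w s : 0 <= w -> 0 <= layer lo w s.
Proof. by move=> w0; rewrite le_min le_max lexx orbT. Qed.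

Lemma layer_le lo w s : layer lo w s <= w.
Proof. by rewrite ge_min lexx orbT. Qed.

Lemma lt_layer lo w s (q : R) : 0 <= q -> q < w -> (lo + q < s) = (q < layer lo w s).
Proof.
move=> q0 qw; rewrite lt_min lt_max qw andbT [q < 0]ltNge q0 orbF.
by rewrite ltrBrDl.
Qed.

Lemma layer_below lo w s : 0 <= w -> s <= lo -> layer lo w s = 0.
Proof. by move=> w0 slo; rewrite /layer max_r ?subr_le0 // min_l. Qed.

Lemma layer_within lo w s : lo <= s <= lo + w -> layer lo w s = s - lo.
Proof.
by case/andP=> los slow; rewrite /layer max_l ?subr_ge0 // min_l // lerBlDl.
Qed.

Lemma layer_above lo w s : 0 <= w -> lo + w <= s -> layer lo w s = w.
Proof.
move=> w0 slow; have los : lo <= s by apply: le_trans slow; rewrite lerDl.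
by rewrite /layer max_l ?subr_ge0 // min_r // lerBrDl.
Qed.

Lemma weighted_sum_le_layers (l1 l2 x1 x2 k1 k2 : R) :
  0 <= x1 <= l1 -> 0 <= x2 <= l2 -> l1 <= l2 ->
  x1 * k1 + x2 * k2 <= Num.max k1 k2 * layer 0 l1 (x1 + x2)
    + k2 * layer l1 (l2 - l1) (x1 + x2) + Num.min k1 k2 * layer l2 l1 (x1 + x2).
Proof.
move=> /andP[x10 x1l] /andP[x20 x2l] l12.
have l1_ge0 : 0 <= l1 by apply: le_trans x1l.
have l21_ge0 : 0 <= l2 - l1 by rewrite subr_ge0.
have [s1|s1] := leP (x1 + x2) l1.
  rewrite layer_within ?subr0; last by apply/andP; split; lra.
  rewrite (layer_below l21_ge0 s1) (layer_below l1_ge0 (le_trans s1 l12)).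
  by have [] := leP k1 k2 => k; nra.
rewrite (layer_above l1_ge0); last by lra.
have [s2|s2] := leP (x1 + x2) l2.
  rewrite (layer_below l1_ge0 s2) layer_within; last by apply/andP; split; lra.
  by have [] := leP k1 k2 => k; nra.
have top : l1 + (l2 - l1) <= x1 + x2 by lra.
rewrite (layer_above l21_ge0 top).
rewrite layer_within; last by apply/andP; split; lra.
by have [] := leP k1 k2 => k; nra.
Qed.

Definition grid_count h y (N : nat) : R := \sum_(k < N) (k%:R * h < y)%R%:R.

Lemma grid_count_bounds h y (N : nat) : 0 <= h -> 0 <= y ->
  [/\ Num.min y (N%:R * h) <= grid_count h y N * h,
      grid_count h y N * h <= y + h & grid_count h y N * h <= N%:R * h].
Proof.
move=> h0 y0; elim: N => [|N [IHmin IHy IHN]].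
  by rewrite /grid_count big_ord0 !mul0r ge_min lexx orbT addr_ge0.
rewrite /grid_count big_ord_recr /= -/(grid_count h y N) mulrDl -natr1 mulrDl mul1r.
have [Nhy|yNh] := ltP (N%:R * h) y; rewrite /= ?mulr1n ?mulr0n ?mul1r ?mul0r ?addr0.
  move: IHmin; rewrite (min_r (ltW Nhy)) => IHmin.
  by split; [rewrite ge_min; apply/orP; right|..]; lra.
move: IHmin; rewrite (min_l yNh) => IHmin.
by split; [rewrite ge_min; apply/orP; left|..]; lra.
Qed.

Lemma mul_le_upper_approx c y h (G : R) : 0 <= h -> y <= G * h <= y + h ->
  c * y <= h * (G * c) + h * `|c|.
Proof.
move=> h0 /andP[yG Gy]; have [c0|c0] := leP 0 c.
  by rewrite ger0_norm //; nra.
by rewrite ltr0_norm //; nra.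
Qed.

Lemma mul_layer_le_grid c lo w s (n : nat) : (0 < n)%N -> 0 <= w ->
  c * layer lo w s <= w / n%:R * \sum_(k < n) (lo + k%:R * (w / n%:R) < s)%R%:R * c
    + w / n%:R * `|c|.
Proof.
move=> n0; rewrite le_eqVlt => /orP[/eqP<-|wpos].
  by rewrite /layer min_r ?le_max ?lexx ?orbT // !mul0r mulr0 addr0.
set h := w / n%:R.
have n0R : 0 < n%:R :> R by rewrite ltr0n.
have h0 : 0 <= h by rewrite divr_ge0 // ltW.
have nh : n%:R * h = w by rewrite /h mulrC divfK // gt_eqF.
set y := layer lo w s.
have := grid_count_bounds n h0 (layer_ge0 lo s (ltW wpos)).
rewrite -/y nh (min_l (layer_le lo w s)) => -[low up _].
have -> : \sum_(k < n) (lo + k%:R * h < s)%R%:R * c = grid_count h y n * c.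
  rewrite /grid_count mulr_suml; apply: eq_bigr => k _; rewrite (@lt_layer lo w) //.
    by rewrite mulr_ge0.
  by rewrite -nh ltr_pM2r ?ltr_nat // /h divr_gt0.
by apply: mul_le_upper_approx => //; apply/andP.
Qed.

Lemma grid_point_bounds w (k n : nat) : (k <= n)%N -> 0 <= w ->
  0 <= k%:R * (w / n%:R) <= w.
Proof.
move=> kn w0; case: n kn => [|n] kn; first by rewrite invr0 !mulr0 lexx.
rewrite mulr_ge0 ?divr_ge0 //= mulrA ler_pdivrMr ?ltr0n // mulrC ler_wpM2l //.
by rewrite ler_nat.
Qed.

End layers.

Section real_integrable.
Context d (T : measurableType d) (R : realType) (mu : {measure set T -> \bar R}).
Context (D : set T) (mD : measurable D).
Local Notation integrable f := (mu.-integrable D (EFin \o f)).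

Lemma integral_EFin (f : T -> R) : integrable f ->
  (\int[mu]_(x in D) (f x)%:E)%E = (\int[mu]_(x in D) f x)%:E.
Proof. by move=> fi; rewrite fineK //; exact: integrable_fin_num. Qed.

Lemma integrable_measurable (f : T -> R) : integrable f -> measurable_fun D f.
Proof. by move=> fi; apply/measurable_EFinP; exact: measurable_int fi. Qed.

Lemma integrable_addr (f g : T -> R) : integrable f -> integrable g ->
  integrable (fun x => f x + g x).
Proof. exact: integrableD. Qed.

Lemma integrable_scaler (k : R) (f : T -> R) : integrable f ->
  integrable (fun x => k * f x).
Proof. by move=> fi; apply: eq_integrable (integrableZl mD k fi) => // x _. Qed.

Lemma integrable_maxr (f g : T -> R) : integrable f -> integrable g ->
  integrable (f \max g).
Proof.
move=> fi gi; apply: (le_integrable mD _ _ (integrableD mD (integrable_norm fi)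
  (integrable_norm gi))).
  by apply/measurable_EFinP; apply: measurable_maxr; exact: integrable_measurable.
move=> x _ /=; rewrite !lee_fin [X in _ <= X]ger0_norm ?addr_ge0 //.
by case: (leP (f x) (g x)) => _; rewrite ?lerDl ?lerDr.
Qed.

Lemma integrable_minr (f g : T -> R) : integrable f -> integrable g ->
  integrable (f \min g).
Proof.
move=> fi gi; have := integrableB mD (integrableD mD fi gi) (integrable_maxr fi gi).
by apply: eq_integrable => // x _ /=; rewrite -EFinB -(addr_min_max (f x)) addrK.
Qed.

Lemma integrable_sumr (I : Type) (s : seq I) (F : I -> T -> R) :
  (forall i, integrable (F i)) -> integrable (fun x => \sum_(i <- s) F i x).
Proof.
move=> Fi; have := integrable_sum mD s (P := xpredT) (fun i _ => Fi i).
by apply: eq_integrable => // x _ /=; rewrite sumEFin.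
Qed.

Lemma Rintegral_sum (I : Type) (s : seq I) (F : I -> T -> R) :
  (forall i, integrable (F i)) ->
  \int[mu]_(x in D) (\sum_(i <- s) F i x) = \sum_(i <- s) \int[mu]_(x in D) F i x.
Proof.
move=> Fi; rewrite /Rintegral.
under eq_integral do rewrite -sumEFin.
by rewrite integral_sum // sum_fine // => i _; exact: integrable_fin_num (Fi i).
Qed.

Lemma integrable_bounded_mulr (h f : T -> R) (M : R) : measurable_fun D h ->
  (forall x, D x -> `|h x| <= M) -> integrable f -> integrable (fun x => h x * f x).
Proof.
move=> mh hM fi; have hb : [bounded h x | x in D].
  exists M; split; first exact: num_real.
  by move=> y My x Dx; apply: le_trans (hM x Dx) (ltW My).
have := integrableMl mD fi mh hb.
by apply: eq_integrable => // x _ /=; rewrite mulrC.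
Qed.

Lemma integrable_patch (A : set T) (f : T -> R) : measurable A ->
  integrable f -> integrable (f \_ A).
Proof.
move=> mA fi; have : mu.-integrable D ((EFin \o f) \_ A).
  by apply/integrable_restrict => //; apply: integrableS fi => //; exact: measurableI.
by apply: eq_integrable => // x _; rewrite /= restrict_EFin.
Qed.

Lemma Rintegral_patch (A : set T) (f : T -> R) : A `<=` D ->
  \int[mu]_(x in D) (f \_ A) x = \int[mu]_(x in A) f x.
Proof. by move=> AD; rewrite -Rintegral_mkcondr setIidr. Qed.

End real_integrable.

Section half_lines.
Context {R : realType}.
Implicit Types x y : \bar R.
Local Notation mR := (measurableTypeR R).

Lemma Rnonneg_itv : @Rnonneg R = `[0, +oo[%classic.
Proof. by apply/seteqP; split => t /=; rewrite in_itv /= andbT. Qed.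

Lemma measurable_Rnonneg : measurable (@Rnonneg R : set mR).
Proof. by rewrite Rnonneg_itv; exact: measurable_itv. Qed.

Lemma measurable_eitv_inf x : measurable (eitv_inf x : set mR).
Proof.
case: x => [r| |].
- have -> : eitv_inf r%:E = `[r, +oo[%classic.
    by apply/seteqP; split => t /=; rewrite in_itv /= andbT ?lee_fin.
  exact: measurable_itv.
- have -> : eitv_inf (+oo%E : \bar R) = set0.
    by apply/seteqP; split => t //=; rewrite leNgt ltey.
  exact: measurable0.
- have -> : eitv_inf (-oo%E : \bar R) = setT.
    by apply/seteqP; split => t //= _; exact: leNye.
  exact: measurableT.
Qed.

Lemma eitv_coE x y : eitv_co x y = eitv_inf x `\` eitv_inf y.
Proof.
apply/seteqP; split => t [xt].
  by rewrite ltNge => /negP.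
by move=> /negP; rewrite -ltNge.
Qed.

Lemma eitv_inf_Rnonneg x : (0 <= x)%E -> eitv_inf x `<=` @Rnonneg R.
Proof. by move=> x0 t xt; rewrite /Rnonneg /= -lee_fin; exact: le_trans xt. Qed.

Lemma subset_eitv_inf x y : (x <= y)%E -> eitv_inf y `<=` eitv_inf x.
Proof. by move=> xy t; exact: le_trans. Qed.

Lemma indic_eitv_inf_le x (s t : R) : s <= t ->
  \1_(eitv_inf x) s <= \1_(eitv_inf x) t :> R.
Proof.
move=> st; rewrite !indicE; have [/set_mem xs|] := boolP (s \in _).
  by rewrite mem_set //; apply: le_trans xs _; rewrite lee_fin.
by case: (t \in _); rewrite ?ler01.
Qed.

End half_lines.

Definition tail (R : realType) (f : R -> R) (x : \bar R) : R :=
  \int[lebesgue_measure]_(t in eitv_inf x) f t.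

Section tails.
Context (R : realType) (K1 K2 : R -> R).
Local Notation mu := (@lebesgue_measure R).
Local Notation D0 := (@Rnonneg R).
Local Notation mR := (measurableTypeR R).
Local Notation integrable D f := (mu.-integrable D (EFin \o f)).
Hypotheses (iK1 : integrable D0 K1) (iK2 : integrable D0 K2).

Lemma integrable_max : integrable D0 (K1 \max K2).
Proof. exact: (integrable_maxr measurable_Rnonneg iK1 iK2). Qed.

Lemma integrable_min : integrable D0 (K1 \min K2).
Proof. exact: (integrable_minr measurable_Rnonneg iK1 iK2). Qed.

Lemma Iabc_tailE (l1 l2 : R) (a b c : \bar R) :
  (0 <= a)%E -> (0 <= b)%E -> (a <= c)%E ->
  Iabc l1 l2 K1 K2 a b c = (l1 * tail (K1 \max K2) a
    + l1 * tail (K1 \min K2) c + (l2 - l1) * tail K2 b)%:E.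
Proof.
move=> a0 b0 ac; have c0 := le_trans a0 ac.
set A := eitv_inf a; set B := eitv_inf b; set C := eitv_inf c.
have mA := measurable_eitv_inf a; have mB := measurable_eitv_inf b.
have mC := measurable_eitv_inf c.
have AD0 := eitv_inf_Rnonneg a0; have BD0 := eitv_inf_Rnonneg b0.
have CD0 := eitv_inf_Rnonneg c0.
have CA : C `<=` A by exact: subset_eitv_inf.
have mAC : measurable (A `\` C : set mR) by exact: measurableD.
have mD0 := @measurable_Rnonneg R.
have iA := integrableS mD0 mA AD0 integrable_max.
have iC f : integrable D0 f -> integrable C f := integrableS mD0 mC CD0.
rewrite /Iabc eitv_coE -/A -/B -/C.
rewrite integral_EFin //; last by apply: integrableS iA => // t [].
rewrite integral_EFin //; last by apply: iC; exact: (integrableD measurable_Rnonneg iK1 iK2).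
rewrite integral_EFin //; last exact: (integrableS mD0 mB BD0 iK2).
have -> : \int[mu]_(t in C) (K1 t + K2 t) =
    \int[mu]_(t in C) (K1 \max K2) t + \int[mu]_(t in C) (K1 \min K2) t.
  rewrite -RintegralD //; [|exact: iC integrable_max|exact: iC integrable_min].
  by apply: eq_Rintegral => t _; rewrite /= [RHS]addrC addr_min_max.
have -> : tail (K1 \max K2) a =
    \int[mu]_(t in A `\` C) (K1 \max K2) t + \int[mu]_(t in C) (K1 \max K2) t.
  rewrite -Rintegral_setU //; last by apply/disj_setPS; rewrite setDKI.
    by rewrite setUC setDUK.
  by rewrite setUC setDUK.
by rewrite -!EFinM -!EFinD /tail -/B -/C; congr EFin; ring.
Qed.

End tails.

Section Iabc_attained.
Context (R : realType) (K1 K2 : R -> R) (l1 l2 : R) (a b c : \bar R).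
Local Notation mu := (@lebesgue_measure R).
Local Notation D0 := (@Rnonneg R).
Local Notation mR := (measurableTypeR R).
Local Notation integrable D f := (mu.-integrable D (EFin \o f)).
Hypotheses (iK1 : integrable D0 K1) (iK2 : integrable D0 K2).
Hypotheses (l1_ge0 : 0 <= l1) (l12 : l1 <= l2).
Hypotheses (a0 : (0 <= a)%E) (ab : (a <= b)%E) (bc : (b <= c)%E).

Let A := eitv_inf a.
Let B := eitv_inf b.
Let C := eitv_inf c.
Let P := D0 `&` (fun t => K2 t <= K1 t) @^-1` [set true].

Definition phi1_abc (t : R) : R :=
  l1 * (\1_P t * \1_A t + (1 - \1_P t) * \1_C t).
Definition phi2_abc (t : R) : R :=
  l1 * (\1_P t * \1_C t + (1 - \1_P t) * \1_A t) + (l2 - l1) * \1_B t.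

Lemma admissible_abc : admissible l1 l2 phi1_abc phi2_abc.
Proof.
have mA : measurable (A : set mR) by exact: measurable_eitv_inf.
have mB : measurable (B : set mR) by exact: measurable_eitv_inf.
have mC : measurable (C : set mR) by exact: measurable_eitv_inf.
have mP : measurable (P : set mR).
  by apply: (measurable_fun_ler (integrable_measurable iK2) (integrable_measurable iK1));
    [exact: measurable_Rnonneg|].
split.
- by rewrite /phi1_abc; repeat (apply: measurable_funM || apply: measurable_funD
    || apply: measurable_funN || exact: measurable_cst || exact: measurable_indic).
- by rewrite /phi2_abc; repeat (apply: measurable_funM || apply: measurable_funD
    || apply: measurable_funN || exact: measurable_cst || exact: measurable_indic).
- move=> t _; rewrite /phi1_abc /phi2_abc !indicE.
  by case: (t \in P); case: (t \in A); case: (t \in B); case: (t \in C);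
    rewrite /= ?(mulr1n, mulr0n, mul1r, mul0r, mulr1, mulr0, subrr, subr0, addr0, add0r);
    split; apply/andP; split; move: l1_ge0 l12; lra.
- move=> s t _ st; have sum_phiE u : phi1_abc u + phi2_abc u =
      l1 * \1_A u + l1 * \1_C u + (l2 - l1) * \1_B u.
    by rewrite /phi1_abc /phi2_abc; ring.
  rewrite !sum_phiE; have l21_ge0 : 0 <= l2 - l1 by rewrite subr_ge0.
  by rewrite !lerD // ler_wpM2l // indic_eitv_inf_le.
Qed.

Lemma phi_abc_integrandE (t : R) : 0 <= t -> phi1_abc t * K1 t + phi2_abc t * K2 t =
  l1 * ((K1 \max K2) \_ A) t + l1 * ((K1 \min K2) \_ C) t + (l2 - l1) * (K2 \_ B) t.
Proof.
move=> t0; rewrite /phi1_abc /phi2_abc !patch_indic /= [\1_P t]indicE.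
have [/set_mem [_ /= K21]|tNP] := boolP (t \in P).
  by rewrite max_l // min_r //=; ring.
have K12 : K1 t <= K2 t.
  by apply/ltW; rewrite ltNge; apply: contra tNP => K21; apply/mem_set.
by rewrite max_r // min_l //=; ring.
Qed.

Lemma Jfun_abc : Jfun K1 K2 phi1_abc phi2_abc = Iabc l1 l2 K1 K2 a b c.
Proof.
have b0 := le_trans a0 ab; have c0 := le_trans b0 bc.
have mD0 := @measurable_Rnonneg R.
have iM := integrable_patch mD0 (measurable_eitv_inf a) (integrable_max iK1 iK2).
have im := integrable_patch mD0 (measurable_eitv_inf c) (integrable_min iK1 iK2).
have i2 := integrable_patch mD0 (measurable_eitv_inf b) iK2.
have iM' := integrable_scaler mD0 l1 iM; have im' := integrable_scaler mD0 l1 im.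
have i2' := integrable_scaler mD0 (l2 - l1) i2.
have iMm := integrable_addr mD0 iM' im'.
rewrite /Jfun; under eq_integral => t /set_mem t0 do rewrite phi_abc_integrandE //.
rewrite (integral_EFin mD0); last exact: (integrable_addr mD0 iMm i2').
rewrite !RintegralD // !RintegralZl // !Rintegral_patch; try exact: eitv_inf_Rnonneg.
by rewrite Iabc_tailE //; exact: le_trans bc.
Qed.

Lemma Iabc_le_Isup : (Iabc l1 l2 K1 K2 a b c <= Isup l1 l2 K1 K2)%E.
Proof.
rewrite -Jfun_abc; apply: ereal_sup_ubound.
by exists phi1_abc, phi2_abc; split => //; exact: admissible_abc.
Qed.

End Iabc_attained.

Section level_sets.
Context {R : realType} (s : R -> R).
Local Notation mu := (@lebesgue_measure R).
Local Notation D0 := (@Rnonneg R).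
Local Notation mR := (measurableTypeR R).
Implicit Types th t : R.
Hypothesis ms : measurable_fun (D0 : set mR) s.
Hypothesis s_nd : forall x y : R, 0 <= x -> x <= y -> s x <= s y.

Definition level_set (th : R) : set R := D0 `&` s @^-1` `]th, +oo[.

Definition level_start (th : R) : \bar R := ereal_inf (EFin @` level_set th).

Lemma level_setP th t : level_set th t <-> 0 <= t /\ th < s t.
Proof. by rewrite /level_set /= in_itv /= andbT. Qed.

Lemma measurable_level_set th : measurable (level_set th : set mR).
Proof. by apply: ms; [exact: measurable_Rnonneg|exact: measurable_itv]. Qed.

Lemma level_set_Rnonneg th : level_set th `<=` D0.
Proof. by move=> t []. Qed.

Lemma level_start_ge0 th : (0 <= level_start th)%E.
Proof. by apply: le_ereal_inf_tmp => _ [t [t0 _] <-]; rewrite lee_fin. Qed.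

Lemma le_level_start th th' : th <= th' -> (level_start th <= level_start th')%E.
Proof.
move=> thth'; apply: le_ereal_inf_tmp => _ [t /level_setP[t0 tht'] <-].
by apply: ereal_inf_lbound; exists t => //; apply/level_setP; split => //; apply: le_lt_trans tht'.
Qed.

Lemma level_set_eitv_inf th : level_set th `<=` eitv_inf (level_start th) /\
  eitv_inf (level_start th) `\` level_set th `<=` [set fine (level_start th)].
Proof.
split=> [t tU|t [xt tNU]]; first by apply: ereal_inf_lbound; exists t.
have [xt'|] := boolP (level_start th < t%:E)%E.
  have [_ [u /level_setP[u0 thu] <-]] := ereal_inf_lt xt'; rewrite lte_fin => ut.
  exfalso; apply: tNU; apply/level_setP; split; first exact: le_trans (ltW ut).
  exact: lt_le_trans thu (s_nd u0 (ltW ut)).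
rewrite -leNgt => tx; have -> : level_start th = t%:E by apply/eqP; rewrite eq_le tx andbT.
by [].
Qed.

Lemma Rintegral_level_set th (f : R -> R) : mu.-integrable D0 (EFin \o f) ->
  \int[mu]_(t in level_set th) f t = tail f (level_start th).
Proof.
move=> fi; have [UE EU] := level_set_eitv_inf th.
have mE := measurable_eitv_inf (level_start th).
have mN : measurable (eitv_inf (level_start th) `\` level_set th : set mR).
  exact: measurableD (measurable_level_set th).
have fE : mu.-integrable (eitv_inf (level_start th)) (EFin \o f).
  by apply: integrableS fi => //; [exact: measurable_Rnonneg|exact: eitv_inf_Rnonneg (level_start_ge0 th)].
rewrite /tail /Rintegral (negligible_integral mN mE fE) ?setDD ?setIidr //.
apply: subset_measure0 mN (measurable_set1 (fine (level_start th))) EU _.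
exact: lebesgue_measure_set1.
Qed.

Lemma patch_level_setE th (f : R -> R) t : 0 <= t ->
  (f \_ (level_set th)) t = (th < s t)%R%:R * f t.
Proof.
move=> t0; rewrite patchE; have [/set_mem /level_setP[_ ->]|tNU] := boolP (t \in _).
  by rewrite mul1r.
suff -> : (th < s t) = false by rewrite mul0r.
by apply/negbTE; apply: contra tNU => tht; apply/mem_set/level_setP.
Qed.

End level_sets.

Section upper_bound.
Context (R : realType) (K1 K2 : R -> R) (l1 l2 : R) (phi1 phi2 : R -> R).
Local Notation mu := (@lebesgue_measure R).
Local Notation D0 := (@Rnonneg R).
Local Notation mR := (measurableTypeR R).
Local Notation integrable D f := (mu.-integrable D (EFin \o f)).
Hypotheses (iK1 : integrable D0 K1) (iK2 : integrable D0 K2).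
Hypotheses (l1_ge0 : 0 <= l1) (l12 : l1 <= l2).
Hypothesis adm : admissible l1 l2 phi1 phi2.

Let s t := phi1 t + phi2 t.
Let U := level_set s.

Let ms : measurable_fun (D0 : set mR) s.
Proof. by case: adm => m1 m2 _ _; exact: measurable_funD. Qed.

Let s_nd x y : 0 <= x -> x <= y -> s x <= s y.
Proof. by case: adm => _ _ _; exact. Qed.

Let mD0 := @measurable_Rnonneg R.

Definition level_value (th1 th2 th3 : R) : R :=
  l1 * \int[mu]_(t in U th1) (K1 \max K2) t + (l2 - l1) * \int[mu]_(t in U th2) K2 t
  + l1 * \int[mu]_(t in U th3) (K1 \min K2) t.

Lemma level_value_le_Iabc_sup th1 th2 th3 : th1 <= th2 -> th2 <= th3 ->
  ((level_value th1 th2 th3)%:E <= Iabc_sup l1 l2 K1 K2)%E.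
Proof.
move=> th12 th23; have st12 := le_level_start s th12; have st23 := le_level_start s th23.
apply: ereal_sup_ubound.
exists (level_start s th1), (level_start s th2), (level_start s th3).
split => //; first exact: level_start_ge0.
rewrite Iabc_tailE ?level_start_ge0 //; last exact: le_trans st23.
rewrite /level_value !Rintegral_level_set //;
  [|exact: integrable_min|exact: integrable_max].
by congr EFin; ring.
Qed.

Definition grid_majorant (n : nat) (lo w : R) (c : R -> R) (t : R) : R :=
  w / n%:R * \sum_(k < n) (c \_ (U (lo + k%:R * (w / n%:R)))) t + w / n%:R * `|c t|.

Lemma le_grid_majorant n lo w (c : R -> R) t : (0 < n)%N -> 0 <= w -> 0 <= t ->
  c t * layer lo w (s t) <= grid_majorant n lo w c t.
Proof.
move=> n0 w0 t0; rewrite /grid_majorant.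
under eq_bigr => k _ do rewrite patch_level_setE //.
exact: mul_layer_le_grid.
Qed.

Lemma integrable_grid_majorant n lo w (c : R -> R) : integrable D0 c ->
  integrable D0 (grid_majorant n lo w c).
Proof.
move=> ci; have nci : integrable D0 (fun t => `|c t|) := integrable_norm ci.
apply: (integrable_addr mD0); apply: (integrable_scaler mD0) => //.
apply: (integrable_sumr mD0) => k; apply: (integrable_patch mD0) => //.
exact: measurable_level_set.
Qed.

Lemma Rintegral_grid_majorant n lo w (c : R -> R) : integrable D0 c ->
  \int[mu]_(t in D0) grid_majorant n lo w c t =
  w / n%:R * \sum_(k < n) \int[mu]_(t in U (lo + k%:R * (w / n%:R))) c t
  + w / n%:R * \int[mu]_(t in D0) `|c t|.
Proof.
move=> ci; have nci : integrable D0 (fun t => `|c t|) := integrable_norm ci.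
have ipatch th : integrable D0 (c \_ (U th)).
  by apply: (integrable_patch mD0) => //; exact: measurable_level_set.
have isum : integrable D0 (fun t => \sum_(k < n) (c \_ (U (lo + k%:R * (w / n%:R)))) t).
  by apply: (integrable_sumr mD0).
rewrite RintegralD //; [|exact: (integrable_scaler mD0)..].
rewrite !RintegralZl // Rintegral_sum //.
by congr (_ * _ + _); apply: eq_bigr => k _; rewrite Rintegral_patch //; exact: level_set_Rnonneg.
Qed.

Let g t := phi1 t * K1 t + phi2 t * K2 t.

Let integrable_g : integrable D0 g.
Proof.
case: adm => m1 m2 phi_bd _.
apply: (integrable_addr mD0).
  apply: (integrable_bounded_mulr mD0 (M := l1) m1 _ iK1) => t t0.
  by have [/andP[p10 p1l] _] := phi_bd t t0; rewrite ger0_norm.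
apply: (integrable_bounded_mulr mD0 (M := l2) m2 _ iK2) => t t0.
by have [_ /andP[p20 p2l]] := phi_bd t t0; rewrite ger0_norm.
Qed.

Lemma Rintegral_le_grid (n : nat) : (0 < n)%N ->
  \int[mu]_(t in D0) g t <=
  n%:R^-1 * \sum_(k < n) level_value (k%:R * (l1 / n%:R))
    (l1 + k%:R * ((l2 - l1) / n%:R)) (l2 + k%:R * (l1 / n%:R))
  + (l1 * \int[mu]_(t in D0) `|(K1 \max K2) t|
    + (l2 - l1) * \int[mu]_(t in D0) `|K2 t| + l1 * \int[mu]_(t in D0) `|(K1 \min K2) t|)
    / n%:R.
Proof.
move=> n0; have l21_ge0 : 0 <= l2 - l1 by rewrite subr_ge0.
have iM := integrable_grid_majorant n 0 l1 (integrable_max iK1 iK2).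
have i2 := integrable_grid_majorant n l1 (l2 - l1) iK2.
have im := integrable_grid_majorant n l2 l1 (integrable_min iK1 iK2).
apply: (@le_trans _ _ (\int[mu]_(t in D0) (grid_majorant n 0 l1 (K1 \max K2) t
  + grid_majorant n l1 (l2 - l1) K2 t + grid_majorant n l2 l1 (K1 \min K2) t))).
  apply: le_Rintegral => //; first exact: (integrable_addr mD0 (integrable_addr mD0 _ _)).
  move=> t t0; case: adm => _ _ /(_ t t0) [x1 x2] _.
  apply: le_trans (weighted_sum_le_layers (K1 t) (K2 t) x1 x2 l12) _.
  rewrite -/(s t); apply: lerD; first apply: lerD.
  - exact: (le_grid_majorant 0 (K1 \max K2)).
  - exact: le_grid_majorant.
  - exact: (le_grid_majorant l2 (K1 \min K2)).
rewrite RintegralD //; last exact: (integrable_addr mD0).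
rewrite RintegralD // !Rintegral_grid_majorant //; [|exact: integrable_min|exact: integrable_max].
under eq_bigr do rewrite add0r.
rewrite /level_value !big_split /= -!mulr_sumr le_eqVlt; apply/orP; left; apply/eqP.
ring.
Qed.

Lemma Jfun_le_Iabc_sup : (Jfun K1 K2 phi1 phi2 <= Iabc_sup l1 l2 K1 K2)%E.
Proof.
rewrite /Jfun integral_EFin //.
have : (Iabc l1 l2 K1 K2 0 0 0 <= Iabc_sup l1 l2 K1 K2)%E.
  by apply: ereal_sup_ubound; exists 0%E, 0%E, 0%E.
rewrite Iabc_tailE //; case E : (Iabc_sup l1 l2 K1 K2) => [m| |] I0; last 2 first.
- exact: leey.
- by move: I0; rewrite leeNy_eq.
rewrite lee_fin; apply: ler_of_forall_ler_add_divn => n n0.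
apply: le_trans (Rintegral_le_grid n0) (lerD _ (lexx _)).
have n0R : 0 < n%:R :> R by rewrite ltr0n.
rewrite mulrC ler_pdivrMr //.
have -> : m * n%:R = \sum_(k < n) m by rewrite sumr_const card_ord mulr_natr.
apply: ler_sum => k _; rewrite -lee_fin -E.
have l21_ge0 : 0 <= l2 - l1 by rewrite subr_ge0.
have /andP[? ?] := grid_point_bounds (ltnW (ltn_ord k)) l1_ge0.
have /andP[? ?] := grid_point_bounds (ltnW (ltn_ord k)) l21_ge0.
by apply: level_value_le_Iabc_sup; lra.
Qed.

End upper_bound.

Theorem proposition3 (R : realType) (l1 l2 : R) (K1 K2 : R -> R)
  (hl1 : 0 < l1) (hl12 : l1 <= l2) (hl2 : l2 <= 1)
  (hK1 : lebesgue_measure.-integrable (@Rnonneg R) (EFin \o K1))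
  (hK2 : lebesgue_measure.-integrable (@Rnonneg R) (EFin \o K2)) :
  Isup l1 l2 K1 K2 = Iabc_sup l1 l2 K1 K2.
Proof.
apply/eqP; rewrite eq_le; apply/andP; split.
- apply: ge_ereal_sup => _ [phi1 [phi2 [adm ->]]].
  exact: Jfun_le_Iabc_sup (ltW hl1) hl12 adm.
- apply: ge_ereal_sup => _ [a [b [c [a0 ab bc ->]]]].
  exact: Iabc_le_Isup (ltW hl1) hl12 a0 ab bc.
Qed.
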